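(* Let $K$ be a field and assume: (1) $A$ is a (left and right) noetherian $K$-algebra without zero divisors; (2) $w\in A$ is a nonzero normal element, i.e. $wA=Aw$, and $\sigma$ is the automorphism of $A$ with $wy=\sigma(y)w$ for all $y\in A$; (3) $J$ is a maximal left ideal of $A$ such that $w-\mu\in J$ for some nonzero $\mu\in K$. Let $x\in A$ be a nonzero non-unit, set $I=Jx$, $L=Ax/I$, $M=A/I$, $N=A/Ax$, so that there is a short exact sequence $0\to L\to M\to N\to 0$ of left $A$-modules. Assume further: (4) for every integer $m\ge 0$ there is no $a\in A$ with $\sigma^m(x)a-1\in J$; (5) $N\supsetneq wN\supsetneq w^2N\supsetneq\cdots\supsetneq w^mN\supsetneq\cdots$ is a strictly descending chain of submodules of $N$; (6) every nonzero submodule of $N$ contains $w^mN$ for some $m\ge 0$. Then $M$ is an essential extension of $L$, i.e. every nonzero submodule of $M$ intersects $L$ nontrivially (equivalently, every left ideal of $A$ strictly containing $I$ contains $Ax$).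
   Context: An element $w$ of a ring $A$ is normal if $wA=Aw$. For a normal element $w$ and a left $A$-module $N$, $w^mN$ is a submodule of $N$. *)

From HB Require Import structures.
From mathcomp Require Import all_boot all_order all_algebra.
Set Implicit Arguments. Unset Strict Implicit. Unset Printing Implicit Defensive.
Import GRing.Theory.
Local Open Scope ring_scope.

Section Defs.
Variable A : pzRingType.

Definition left_ideal (S : A -> Prop) : Prop :=
  S 0 /\ (forall a b, S a -> S b -> S (a + b)) /\ (forall r a, S a -> S (r * a)).
Definition right_ideal (S : A -> Prop) : Prop :=
  S 0 /\ (forall a b, S a -> S b -> S (a + b)) /\ (forall r a, S a -> S (a * r)).

Definition left_noetherian : Prop :=
  forall C : nat -> A -> Prop, (forall n, left_ideal (C n)) ->
    (forall n a, C n a -> C n.+1 a) ->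
    exists n0, forall n, (n0 <= n)%N -> forall a, C n a <-> C n0 a.
Definition right_noetherian : Prop :=
  forall C : nat -> A -> Prop, (forall n, right_ideal (C n)) ->
    (forall n a, C n a -> C n.+1 a) ->
    exists n0, forall n, (n0 <= n)%N -> forall a, C n a <-> C n0 a.

Definition no_zero_divisors : Prop :=
  forall a b : A, a * b = 0 -> a = 0 \/ b = 0.

Definition normal_elt (w : A) : Prop :=
  forall a, (exists b, w * a = b * w) /\ (exists b, a * w = w * b).

Definition maximal_left_ideal (J : A -> Prop) : Prop :=
  left_ideal J /\ ~ J 1 /\
  forall Q, left_ideal Q -> (forall a, J a -> Q a) ->
    (forall a, Q a <-> J a) \/ (forall a, Q a).

Definition is_unit (x : A) : Prop := exists y, x * y = 1 /\ y * x = 1.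

Definition mul_right_set (J : A -> Prop) (x : A) : A -> Prop :=
  fun a => exists j, J j /\ a = j * x.
Definition left_principal (x : A) : A -> Prop := fun a => exists r, a = r * x.

(* preimage in A of the submodule w^m N of N = A/Ax *)
Definition wpow_quot (w x : A) (m : nat) : A -> Prop :=
  fun a => exists b c, a = w ^+ m * b + c * x.
End Defs.

From HB Require Import structures.
From mathcomp Require Import all_boot all_order all_algebra.
From Stdlib Require Import Classical.
Import GRing.Theory.
Local Open Scope ring_scope.

(* Let Q be a left ideal strictly containing I = Jx; we produce an element of
   Q in Ax \ Jx.  If Q lies inside Ax, any element of Q \ Jx will do.
   Otherwise Q + Ax strictly contains Ax, so by hypothesis (6) it contains
   w^m for some m, say w^m = q + r x with q in Q.  Writing s = sigma^m(x),
   the twisted commutation w^m x = s w^m gives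
       s q = w^m x - s r x = (w^m - s r) x,
   an element of Q lying in Ax.  Were it in Jx, say equal to j x, cancelling
   x (A has no zero divisors) would give w^m - s r = j in J; as
   w^m - mu^m lies in J, so would mu^m - s r, whence s (r mu^-m) - 1 in J,
   contradicting hypothesis (4). *)

Lemma twisted_comm_pow {A : pzRingType} {w : A} {sigma : A -> A}
  (Hsig : forall y : A, w * y = sigma y * w) (m : nat) (y : A) :
  w ^+ m * y = iter m sigma y * w ^+ m.
Proof.
elim: m => [|m IH]; first by rewrite expr0 mul1r mulr1.
by rewrite exprS -mulrA IH mulrA Hsig iterS -mulrA.
Qed.

Lemma left_idealB {A : pzRingType} {J : A -> Prop} (HJ : left_ideal J)
  {a b : A} : J a -> J b -> J (a - b).
Proof.
case: HJ => [_ [JD JM]] Ja Jb; apply: JD => //; rewrite -mulN1r; exact: JM.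
Qed.

Lemma pow_sub_scalar_in {K : fieldType} {A : algType K} {J : A -> Prop}
  (HJ : left_ideal J) {w : A} {mu : K} (HwJ : J (w - mu%:A)) (m : nat) :
  J (w ^+ m - (mu ^+ m)%:A).
Proof.
case: HJ => [J0 [JD JM]].
elim: m => [|m IH]; first by rewrite !expr0 scale1r subrr.
have -> : w ^+ m.+1 - (mu ^+ m.+1)%:A =
   w ^+ m * (w - mu%:A) + mu%:A * (w ^+ m - (mu ^+ m)%:A).
  rewrite !mulrBr mulr_algr mulr_algl -exprSr addrA subrK.
  by rewrite mulr_algl scalerA -exprS.
by apply: JD; apply: JM.
Qed.

Lemma right_inverse_mod {K : fieldType} {A : algType K} {J : A -> Prop}
  (HJ : left_ideal J) {y s r : A} {c : K} (Hc : c != 0) :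
  J (y - c%:A) -> J (y - s * r) -> J (s * (r * (c^-1)%:A) - 1).
Proof.
move=> Jyc Jysr.
have Jcsr : J (c%:A - s * r).
  by have := left_idealB HJ Jysr Jyc; rewrite opprB addrC subrKA.
case: HJ => [_ [_ JM]].
have := JM (- (c^-1)%:A) _ Jcsr.
rewrite mulNr mulrBr mulr_algl scalerA mulVf // scale1r opprB.
by rewrite mulr_algl mulr_algr scalerAr.
Qed.

Lemma mulIr_nzd {A : pzRingType} (Hdom : no_zero_divisors A) {x a b : A} :
  x != 0 -> a * x = b * x -> a = b.
Proof.
move=> Hx0 Hab; have : (a - b) * x = 0 by rewrite mulrBl Hab subrr.
case/Hdom => [/eqP|/eqP]; last by rewrite (negbTE Hx0).
by rewrite subr_eq0 => /eqP.
Qed.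

Definition add_principal {A : pzRingType} (Q : A -> Prop) (x : A) : A -> Prop :=
  fun a => exists q r, Q q /\ a = q + r * x.

Lemma add_principal_left_ideal {A : pzRingType} {Q : A -> Prop} {x : A} :
  left_ideal Q -> left_ideal (add_principal Q x).
Proof.
case=> [Q0 [QD QM]]; split; first by exists 0, 0; rewrite mul0r addr0.
split.
  move=> a b [q [r [Qq ->]]] [q' [r' [Qq' ->]]].
  exists (q + q'), (r + r'); split; first exact: QD.
  by rewrite mulrDl addrACA.
move=> t a [q [r [Qq ->]]]; exists (t * q), (t * r); split; first exact: QM.
by rewrite mulrDr mulrA.
Qed.

Lemma add_principal_contains {A : pzRingType} {Q : A -> Prop} {x a : A} :
  Q 0 -> left_principal x a -> add_principal Q x a.
Proof. by move=> Q0 [r ->]; exists 0, r; rewrite add0r. Qed.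

Lemma add_principal_base {A : pzRingType} {Q : A -> Prop} {x a : A} :
  Q a -> add_principal Q x a.
Proof. by move=> Qa; exists a, 0; rewrite mul0r addr0. Qed.

Theorem theorem2p2 (K : fieldType) (A : algType K)
  (HlN : left_noetherian A) (HrN : right_noetherian A)
  (Hdom : no_zero_divisors A)
  (w : A) (Hw0 : w != 0) (Hwn : normal_elt w)
  (sigma : {rmorphism A -> A}) (Hsig_bij : bijective sigma)
  (Hsig_lin : forall (k : K) (y : A), sigma (k *: y) = k *: sigma y)
  (Hsig : forall y : A, w * y = sigma y * w)
  (J : A -> Prop) (HJ : maximal_left_ideal J)
  (mu : K) (Hmu0 : mu != 0) (HwJ : J (w - mu%:A))
  (x : A) (Hx0 : x != 0) (Hxu : ~ is_unit x)
  (H4 : forall m : nat, ~ (exists a : A, J (iter m sigma x * a - 1)))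
  (H5 : forall m : nat, (forall a, wpow_quot w x m.+1 a -> wpow_quot w x m a) /\
                        (exists a, wpow_quot w x m a /\ ~ wpow_quot w x m.+1 a))
  (H6 : forall Q : A -> Prop, left_ideal Q ->
          (forall a, left_principal x a -> Q a) ->
          (exists a, Q a /\ ~ left_principal x a) ->
          exists m : nat, forall a, wpow_quot w x m a -> Q a) :
  forall Q : A -> Prop, left_ideal Q ->
    (forall a, mul_right_set J x a -> Q a) ->
    (exists a, Q a /\ ~ mul_right_set J x a) ->
    exists a, Q a /\ left_principal x a /\ ~ mul_right_set J x a.
Proof.
move=> Q HQ _ [a0 [Qa0 na0]].
have HJl : left_ideal J by case: HJ.
have [[a1 [Qa1 na1]]|QsubAx] := classic (exists a, Q a /\ ~ left_principal x a);
  last first.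
  exists a0; do !split => //; apply: NNPP => na0x; apply: QsubAx; by exists a0.
have [Q0 [_ QM]] := HQ.
have [m Hm] : exists m : nat, forall a, wpow_quot w x m a -> add_principal Q x a.
  apply: H6; first exact: add_principal_left_ideal.
    by move=> a; apply: add_principal_contains.
  by exists a1; split => //; apply: add_principal_base.
have [q [r [Qq Hwm]]] : add_principal Q x (w ^+ m).
  by apply: Hm; exists 1, 0; rewrite mulr1 mul0r addr0.
set s := iter m sigma x.
have Hsq : s * q = (w ^+ m - s * r) * x.
  have -> : q = w ^+ m - r * x by rewrite Hwm addrK.
  by rewrite mulrBr mulrBl (twisted_comm_pow Hsig) mulrA.
exists (s * q); split; first exact: QM.
split; first by exists (w ^+ m - s * r).
move=> [j [Jj Hj]].
have Hjw : w ^+ m - s * r = j by apply: (mulIr_nzd Hdom Hx0); rewrite -Hsq.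
apply: (H4 m); exists (r * ((mu ^+ m)^-1)%:A).
apply: (right_inverse_mod HJl (expf_neq0 m Hmu0) (pow_sub_scalar_in HJl HwJ m)).
by rewrite Hjw.
Qed.
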